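(* Let $I$ be an interval and let $f:I\rightarrow\mathbb{R}$ be continuous on $I$ and of class $C^1$ on the interior $\operatorname{int}I$. Then the following are equivalent: (i) $f$ is $3$-convex; (ii) $f'\left(\frac{a+b}{2}\right)\leq\frac{f(b)-f(a)}{b-a}$ for all $a<b$ in $\operatorname{int}I$; (iii) $\frac{f(b)-f(a)}{b-a}\leq\frac{1}{2}\left(\frac{f'(a)+f'(b)}{2}+f'\left(\frac{a+b}{2}\right)\right)$ for all $a<b$ in $\operatorname{int}I$.
   Context: A function $f$ defined on an interval $I$ is called $3$-convex if for all $x_0<x_1<x_2<x_3$ in $I$ the third-order divided difference $[x_0,x_1,x_2,x_3;f]=\sum_{j=0}^{3}\frac{f(x_j)}{\prod_{k\neq j}(x_j-x_k)}$ is nonnegative. *)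

From Stdlib Require Import Reals Lra.
From Coquelicot Require Import Coquelicot.
Open Scope R_scope.

Definition is_interval (I : R -> Prop) : Prop :=
  forall x y z, I x -> I z -> x <= y <= z -> I y.

Definition interior_of (I : R -> Prop) (x : R) : Prop :=
  exists eps : posreal, forall y, Rabs (y - x) < eps -> I y.

Definition divdiff3 (f : R -> R) (x0 x1 x2 x3 : R) : R :=
    f x0 / ((x0 - x1) * (x0 - x2) * (x0 - x3))
  + f x1 / ((x1 - x0) * (x1 - x2) * (x1 - x3))
  + f x2 / ((x2 - x0) * (x2 - x1) * (x2 - x3))
  + f x3 / ((x3 - x0) * (x3 - x1) * (x3 - x2)).

Definition convex3_on (I : R -> Prop) (f : R -> R) : Prop :=
  forall x0 x1 x2 x3, I x0 -> I x1 -> I x2 -> I x3 ->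
    x0 < x1 -> x1 < x2 -> x2 < x3 -> 0 <= divdiff3 f x0 x1 x2 x3.

Definition continuous_on_set (I : R -> Prop) (f : R -> R) : Prop :=
  forall x, I x -> filterlim f (within I (locally x)) (locally (f x)).

Definition C1_on_interior (I : R -> Prop) (f : R -> R) : Prop :=
  forall x, interior_of I x -> ex_derive f x /\ continuous (Derive f) x.

From Stdlib Require Import Reals Lra.
From Coquelicot Require Import Coquelicot.
Open Scope R_scope.

(* Write g = f'.  Each of (i), (ii), (iii) is equivalent to the convexity of g on the
   interior of I.
   - (i) -> (ii): at the nodes m -+ r, m -+ e the third divided difference compares the
     symmetric slopes of f of radii r and e, and as e -> 0 the latter tends to g m.
   - g convex -> (i): f minus its cubic interpolant at x0 < x1 < x2 < x3 has four zeros,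
     so by Rolle g meets a parabola of leading coefficient 3 [x0, x1, x2, x3; f] at three
     points.
   - (ii) -> g convex: if g is not convex, some perturbation g + alpha u + eps u^2 has an
     interior maximum t; by (ii) and the mean value theorem it is larger somewhere near t.
   - g convex -> (iii): the right Hermite-Hadamard inequality on both halves of [a, b].
   - (iii) -> g convex: (iii) only controls means of g, so f is first smoothed with a hat
     kernel, which preserves (iii).  Where g fails midpoint convexity the smoothed
     derivative is strictly concave, so there the trapezoid rule strictly underestimates
     its mean, against (iii). *)

Lemma MVT_is_derive (phi dphi : R -> R) (a b : R) :
  a < b -> (forall t, a <= t <= b -> is_derive phi t (dphi t)) ->
  exists c, a < c < b /\ phi b - phi a = dphi c * (b - a).
Proof.
  intros Hab Hd.
  destruct (MVT_cor2 phi dphi a b Hab) as [c [E Hc]].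
  - intros c Hc. apply is_derive_Reals, Hd, Hc.
  - exists c. split; assumption.
Qed.

Lemma Rolle_is_derive (phi dphi : R -> R) (a b : R) :
  a < b -> (forall t, a <= t <= b -> continuity_pt phi t) ->
  (forall t, a < t < b -> is_derive phi t (dphi t)) -> phi a = phi b ->
  exists c, a < c < b /\ dphi c = 0.
Proof.
  intros Hab Hc Hd E.
  assert (pr : forall t, a < t < b -> derivable_pt phi t).
  { intros t Ht. exists (dphi t). apply is_derive_Reals, Hd, Ht. }
  destruct (Rolle phi a b pr Hc Hab E) as [c [Pc Hc0]].
  exists c. split; [exact Pc|].
  rewrite <- Hc0. symmetry. apply derive_pt_eq_0, is_derive_Reals, Hd, Pc.
Qed.

Lemma le_of_derive_nonneg (phi dphi : R -> R) (a b : R) :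
  a <= b -> (forall t, a <= t <= b -> is_derive phi t (dphi t)) ->
  (forall t, a <= t <= b -> 0 <= dphi t) -> phi a <= phi b.
Proof.
  intros Hab Hd Hp. destruct (Req_dec a b) as [<-|Hne]; [lra|].
  destruct (MVT_is_derive phi dphi a b) as [c [Hc E]]; [lra|exact Hd|].
  assert (0 <= dphi c) by (apply Hp; lra). nra.
Qed.

Lemma lt_of_derive_neg (phi dphi : R -> R) (a b : R) :
  a < b -> (forall t, a <= t <= b -> is_derive phi t (dphi t)) ->
  (forall t, a < t < b -> dphi t < 0) -> phi b < phi a.
Proof.
  intros Hab Hd Hn.
  destruct (MVT_is_derive phi dphi a b) as [c [Hc E]]; [exact Hab|exact Hd|].
  assert (dphi c < 0) by (apply Hn, Hc). nra.
Qed.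

(* Rewrites the [Derive] terms left by [auto_derive] with the [is_derive] hypotheses in
   the context; the points need only be convertible ([c + - t] against [c - t]). *)
Ltac derive_by_hyps :=
  repeat match goal with
  | |- context [Derive ?G ?x] =>
      match goal with H : is_derive _ _ _ |- _ => rewrite (is_derive_unique G x _ H) end
  end.

Ltac derive_with_hyps :=
  auto_derive; [repeat split; try (eexists; eassumption) | derive_by_hyps].

Lemma locally_shift (x d : R) (P : R -> Prop) :
  locally (x + d) P -> locally x (fun u => P (u + d)).
Proof.
  intros [eps H]. exists eps. intros u Hu. apply H.
  change (Rabs (u + d - (x + d)) < eps).
  replace (u + d - (x + d)) with (u - x) by ring. exact Hu.
Qed.

Lemma continuous_shift (g : R -> R) (x d : R) :
  continuous g (x + d) -> continuous (fun u => g (u + d)) x.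
Proof.
  apply (@continuous_comp R_UniformSpace R_UniformSpace R_UniformSpace (fun u => u + d) g).
  apply (@ex_derive_continuous R_AbsRing R_NormedModule). auto_derive. trivial.
Qed.

Lemma continuous_lt_locally (g : R -> R) (x l : R) :
  continuous g x -> l < g x -> locally x (fun u => l < g u).
Proof. intros Hg Hl. exact (Hg _ (open_gt l (g x) Hl)). Qed.

Lemma continuous_gt_locally (g : R -> R) (x l : R) :
  continuous g x -> g x < l -> locally x (fun u => g u < l).
Proof. intros Hg Hl. exact (Hg _ (open_lt l (g x) Hl)). Qed.

Lemma antiderivative_on (J : R -> Prop) (phi : R -> R) (c : R) :
  is_interval J -> open J -> J c -> (forall x, J x -> continuous phi x) ->
  forall x, J x -> is_derive (fun y => RInt phi c y) x (phi x).
Proof.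
  intros HJ HJo Jc Hphi x Jx.
  apply (is_derive_RInt phi (fun y => RInt phi c y) c x); [|apply Hphi, Jx].
  apply (filter_imp J); [|apply HJo, Jx].
  intros y Jy. apply (RInt_correct (V := R_CompleteNormedModule)).
  apply (ex_RInt_continuous (V := R_CompleteNormedModule)). intros z Hz. apply Hphi.
  apply (HJ (Rmin c y) z (Rmax c y)); auto.
  - unfold Rmin; destruct Rle_dec; auto.
  - unfold Rmax; destruct Rle_dec; auto.
Qed.

Lemma second_antiderivative_on (J : R -> Prop) (f : R -> R) (c : R) :
  is_interval J -> open J -> J c -> (forall x, J x -> continuous f x) ->
  exists F FF : R -> R, forall x, J x -> is_derive FF x (F x) /\ is_derive F x (f x).
Proof.
  intros HJ HJo Jc Hf.
  assert (HF := antiderivative_on J f c HJ HJo Jc Hf).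
  exists (fun y => RInt f c y), (fun y => RInt (fun z => RInt f c z) c y).
  intros x Jx. split; [|exact (HF x Jx)].
  apply (antiderivative_on J); auto. intros y Jy.
  apply (@ex_derive_continuous R_AbsRing R_NormedModule). eexists. apply HF, Jy.
Qed.

(* [interior_of I x] is definitionally [locally x I]. *)
Section Interior.
Variable I : R -> Prop.
Hypothesis I_interval : is_interval I.

Lemma interior_sub x : interior_of I x -> I x.
Proof. exact (locally_singleton x I). Qed.

Lemma interior_of_between a b c : I a -> I c -> a < b < c -> interior_of I b.
Proof.
  intros Ha Hc Hb. apply (locally_interval I b a c); simpl; try lra.
  intros y Hay Hyc. apply (I_interval a y c); auto; lra.
Qed.

Lemma interior_interval : is_interval (interior_of I).
Proof.
  intros x y z Hx Hz Hy.
  destruct (Req_dec x y) as [<-|]; [exact Hx|].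
  destruct (Req_dec y z) as [->|]; [exact Hz|].
  apply (interior_of_between x y z); try apply interior_sub; auto; lra.
Qed.

Lemma interior_open : open (interior_of I).
Proof. intros x Hx. exact (locally_locally x I Hx). Qed.

End Interior.

(** * Convexity criteria *)

Definition convex_on (J : R -> Prop) (g : R -> R) : Prop :=
  forall x y z, J x -> J z -> x < y < z ->
    g y * (z - x) <= (z - y) * g x + (y - x) * g z.

Lemma convex_on_le (J : R -> Prop) (g : R -> R) : convex_on J g ->
  forall x y z, J x -> J z -> x <= y <= z ->
    g y * (z - x) <= (z - y) * g x + (y - x) * g z.
Proof.
  intros Hc x y z Hx Hz Hy.
  destruct (Req_dec y x) as [->|]; [right; ring|].
  destruct (Req_dec y z) as [->|]; [right; ring|].
  apply Hc; auto; lra.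
Qed.

Lemma le_max_of_no_interior_max (k : R -> R) (x z : R) : x < z ->
  (forall t, x <= t <= z -> continuous k t) ->
  (forall t r, 0 < r -> x <= t - r -> t + r <= z ->
     exists s, t - r <= s <= t + r /\ k t < k s) ->
  forall y, x <= y <= z -> k y <= Rmax (k x) (k z).
Proof.
  intros Hxz Hc Hk y Hy.
  destruct (continuous_ab_maj_consistent k x z) as [M [HM HMxz]]; [lra|exact Hc|].
  destruct (Req_dec M x) as [->|Hx].
  { eapply Rle_trans; [apply HM, Hy|apply Rmax_l]. }
  destruct (Req_dec M z) as [->|Hz].
  { eapply Rle_trans; [apply HM, Hy|apply Rmax_r]. }
  set (r := Rmin (M - x) (z - M)).
  assert (Hr : 0 < r) by (apply Rmin_glb_lt; lra).
  pose proof (Rmin_l (M - x) (z - M)). pose proof (Rmin_r (M - x) (z - M)).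
  destruct (Hk M r Hr) as [s [Hs Hks]]; try (unfold r; lra).
  assert (k s <= k M) by (apply HM; unfold r in Hs; lra). lra.
Qed.

Lemma convex_on_of_perturbation (J : R -> Prop) (g : R -> R) :
  is_interval J -> (forall t, J t -> continuous g t) ->
  (forall alpha eps t r, 0 < eps -> 0 < r -> J (t - r) -> J (t + r) ->
     exists s, t - r <= s <= t + r /\
       g t + (alpha * t + eps * t ^ 2) < g s + (alpha * s + eps * s ^ 2)) ->
  convex_on J g.
Proof.
  intros HJ Hg Hpert x y z Hx Hz Hxyz.
  apply Rnot_lt_le. intro Hlt.
  set (V := g y * (z - x) - ((z - y) * g x + (y - x) * g z)).
  assert (HV : 0 < V) by (unfold V; lra).
  set (eps := V / (2 * (z - x) * (y - x) * (z - y))).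
  assert (Heps : 0 < eps).
  { apply Rdiv_lt_0_compat; [exact HV|].
    repeat apply Rmult_lt_0_compat; lra. }
  set (alpha := - ((g z - g x) / (z - x)) - eps * (x + z)).
  set (k := fun u => g u + (alpha * u + eps * u ^ 2)).
  assert (Hkxz : k x = k z) by (unfold k, alpha; field; lra).
  assert (Hky : k x < k y).
  { assert (E : k y - k x = V / (2 * (z - x))).
    { unfold k, alpha, eps, V. field. repeat split; lra. }
    assert (0 < V / (2 * (z - x))) by (apply Rdiv_lt_0_compat; lra). lra. }
  assert (Hmax : k y <= Rmax (k x) (k z)).
  { apply le_max_of_no_interior_max; [lra| |  |lra].
    - intros t Ht. apply (continuous_plus g).
      + apply Hg, (HJ x t z); auto.
      + apply (@ex_derive_continuous R_AbsRing R_NormedModule). auto_derive. trivial.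
    - intros t r Hr Htr Htr'. apply Hpert; auto; apply (HJ x _ z); auto; lra. }
  rewrite <- Hkxz, Rmax_left in Hmax; lra.
Qed.

Lemma convex_on_of_midpoint (J : R -> Prop) (g : R -> R) :
  is_interval J -> (forall t, J t -> continuous g t) ->
  (forall t r, 0 < r -> J (t - r) -> J (t + r) -> g t <= (g (t - r) + g (t + r)) / 2) ->
  convex_on J g.
Proof.
  intros HJ Hg Hmid. apply convex_on_of_perturbation; [exact HJ|exact Hg|].
  intros alpha eps t r Heps Hr Hm Hp.
  set (k := fun u => g u + (alpha * u + eps * u ^ 2)).
  assert (E : k (t - r) + k (t + r) - 2 * k t
              = g (t - r) + g (t + r) - 2 * g t + 2 * (eps * r ^ 2)) by (unfold k; ring).
  assert (g t <= (g (t - r) + g (t + r)) / 2) by (apply Hmid; assumption).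
  assert (0 < eps * r ^ 2) by (apply Rmult_lt_0_compat; [lra|apply pow_lt; lra]).
  destruct (Rlt_or_le (k t) (k (t - r))).
  - exists (t - r). split; [lra|assumption].
  - exists (t + r). split; [lra|]. fold (k t) (k (t + r)). lra.
Qed.

Lemma convex_derive_of_midpoint_le_slope (J : R -> Prop) (f g : R -> R) :
  is_interval J -> (forall t, J t -> is_derive f t (g t)) ->
  (forall t, J t -> continuous g t) ->
  (forall a b, J a -> J b -> a < b -> g ((a + b) / 2) <= (f b - f a) / (b - a)) ->
  convex_on J g.
Proof.
  intros HJ Hf Hg Hmid. apply convex_on_of_perturbation; [exact HJ|exact Hg|].
  intros alpha eps t r Heps Hr Hm Hp.
  set (k := fun u => g u + (alpha * u + eps * u ^ 2)).
  set (K := fun u => f u + (alpha * u ^ 2 / 2 + eps * u ^ 3 / 3)).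
  destruct (MVT_is_derive K k (t - r) (t + r)) as [c [Hc E]]; [lra| |].
  { intros u Hu. assert (Ju : J u) by (apply (HJ (t - r) u (t + r)); auto).
    pose proof (Hf u Ju). unfold K, k. derive_with_hyps. field. }
  exists c. split; [lra|]. fold (k t) (k c).
  assert (Hslope : g t * (2 * r) <= f (t + r) - f (t - r)).
  { assert (H := Hmid (t - r) (t + r) Hm Hp ltac:(lra)).
    replace ((t - r + (t + r)) / 2) with t in H by field.
    replace (t + r - (t - r)) with (2 * r) in H by ring.
    apply (Rmult_le_compat_r (2 * r)) in H; [|lra].
    replace ((f (t + r) - f (t - r)) / (2 * r) * (2 * r)) with (f (t + r) - f (t - r)) in H
      by (field; lra).
    exact H. }
  assert (Hkc : k c * (2 * r) = f (t + r) - f (t - r)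
                 + 2 * r * (alpha * t + eps * t ^ 2) + 2 * eps * r ^ 3 / 3).
  { replace (2 * r) with (t + r - (t - r)) by ring. rewrite <- E. unfold K. field. }
  apply (Rmult_lt_reg_r (2 * r)); [lra|].
  assert (0 < eps * r ^ 3) by (apply Rmult_lt_0_compat; [lra|apply pow_lt; lra]).
  unfold k at 1. lra.
Qed.

(** * Third-order convexity and convexity of the derivative *)

Definition clamp (a b t : R) : R := Rmax a (Rmin t b).

Lemma clamp_id (a b t : R) : a <= t <= b -> clamp a b t = t.
Proof. intros Ht. unfold clamp. rewrite Rmin_left, Rmax_right; lra. Qed.

Lemma clamp_range (a b t : R) : a <= b -> a <= clamp a b t <= b.
Proof. intros Hab. unfold clamp, Rmax, Rmin. repeat destruct Rle_dec; lra. Qed.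

Lemma clamp_lipschitz (a b u v : R) : Rabs (clamp a b u - clamp a b v) <= Rabs (u - v).
Proof. unfold clamp, Rmax, Rmin. repeat destruct Rle_dec; split_Rabs; lra. Qed.

(* Composing with the clamp turns continuity within I into two-sided continuity. *)
Lemma continuity_pt_clamp_comp (I : R -> Prop) (f : R -> R) (a b t : R) :
  is_interval I -> I a -> I b -> a <= t <= b ->
  filterlim f (within I (locally t)) (locally (f t)) ->
  continuity_pt (fun u => f (clamp a b u)) t.
Proof.
  intros HI Ia Ib Ht Hf. apply continuity_pt_filterlim.
  unfold continuous. rewrite (clamp_id a b t Ht).
  apply (filterlim_comp _ _ _ (clamp a b) f (locally t) (within I (locally t))); [|exact Hf].
  intros P [eps HP]. exists eps. intros u Hu. apply HP.
  - change (Rabs (clamp a b u - t) < eps).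
    rewrite <- (clamp_id a b t Ht).
    eapply Rle_lt_trans; [apply clamp_lipschitz|exact Hu].
  - apply (HI a _ b); auto. apply clamp_range. lra.
Qed.

Lemma convex_on_quadratic_coef (J : R -> Prop) (psi : R -> R) (al be ga y1 y2 y3 : R) :
  convex_on J psi -> J y1 -> J y3 -> y1 < y2 < y3 ->
  psi y1 = al + be * y1 + ga * y1 ^ 2 -> psi y2 = al + be * y2 + ga * y2 ^ 2 ->
  psi y3 = al + be * y3 + ga * y3 ^ 2 -> 0 <= ga.
Proof.
  intros Hc H1 H3 Hy E1 E2 E3.
  pose proof (Hc y1 y2 y3 H1 H3 Hy) as Hcv. rewrite E1, E2, E3 in Hcv.
  assert (E : (al + be * y2 + ga * y2 ^ 2) * (y3 - y1)
              - ((y3 - y2) * (al + be * y1 + ga * y1 ^ 2) + (y2 - y1) * (al + be * y3 + ga * y3 ^ 2))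
              = - ga * ((y3 - y2) * (y2 - y1) * (y3 - y1))) by ring.
  assert (0 < (y3 - y2) * (y2 - y1) * (y3 - y1)) by (repeat apply Rmult_lt_0_compat; lra).
  nra.
Qed.

Lemma divdiff3_nonneg_of_convex_derive (phi psi : R -> R) (x0 x1 x2 x3 : R) :
  x0 < x1 -> x1 < x2 -> x2 < x3 ->
  (forall t, x0 <= t <= x3 -> continuity_pt phi t) ->
  (forall t, x0 < t < x3 -> is_derive phi t (psi t)) ->
  convex_on (fun t => x0 < t < x3) psi ->
  0 <= divdiff3 phi x0 x1 x2 x3.
Proof.
  intros H01 H12 H23 Hc Hd Hcv.
  set (D := divdiff3 phi x0 x1 x2 x3).
  set (A := (phi x1 - phi x0) / (x1 - x0)).
  set (S := ((phi x2 - phi x1) / (x2 - x1) - A) / (x2 - x0)).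
  set (k := fun t => phi t - (phi x0 + A * (t - x0) + S * (t - x0) * (t - x1)
                              + D * ((t - x0) * (t - x1) * (t - x2)))).
  set (dk := fun t => psi t - (A + S * (2 * t - x0 - x1)
               + D * ((t - x1) * (t - x2) + (t - x0) * (t - x2) + (t - x0) * (t - x1)))).
  assert (Hkc : forall t, x0 <= t <= x3 -> continuity_pt k t).
  { intros t Ht. unfold k. apply continuity_pt_minus; [apply Hc, Ht|reg]. }
  assert (Hkd : forall t, x0 < t < x3 -> is_derive k t (dk t)).
  { intros t Ht. pose proof (Hd t Ht). unfold k, dk. derive_with_hyps. ring. }
  assert (k0 : k x0 = 0) by (unfold k; ring).
  assert (k1 : k x1 = 0) by (unfold k, A; field; lra).
  assert (k2 : k x2 = 0) by (unfold k, S, A; field; lra).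
  assert (k3 : k x3 = 0) by (unfold k, D, S, A, divdiff3; field; repeat split; lra).
  destruct (Rolle_is_derive k dk x0 x1) as [y1 [Hy1 Z1]];
    [lra|intros; apply Hkc; lra|intros; apply Hkd; lra|congruence|].
  destruct (Rolle_is_derive k dk x1 x2) as [y2 [Hy2 Z2]];
    [lra|intros; apply Hkc; lra|intros; apply Hkd; lra|congruence|].
  destruct (Rolle_is_derive k dk x2 x3) as [y3 [Hy3 Z3]];
    [lra|intros; apply Hkc; lra|intros; apply Hkd; lra|congruence|].
  set (al := A - S * (x0 + x1) + D * (x0 * x1 + x0 * x2 + x1 * x2)).
  set (be := 2 * S - 2 * D * (x0 + x1 + x2)).
  assert (Hq : forall y, dk y = 0 -> psi y = al + be * y + 3 * D * y ^ 2).
  { intros y Z. unfold dk in Z. apply Rminus_diag_uniq in Z. rewrite Z. unfold al, be. ring. }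
  assert (0 <= 3 * D).
  { apply (convex_on_quadratic_coef _ psi al be _ y1 y2 y3 Hcv); try (apply Hq; assumption); lra. }
  lra.
Qed.

Lemma convex3_of_convex_derive (I : R -> Prop) (f g : R -> R) :
  is_interval I -> continuous_on_set I f ->
  (forall t, interior_of I t -> is_derive f t (g t)) ->
  convex_on (interior_of I) g -> convex3_on I f.
Proof.
  intros HI Hc Hd Hcv x0 x1 x2 x3 I0 I1 I2 I3 H01 H12 H23.
  set (fc := fun t => f (clamp x0 x3 t)).
  assert (E : divdiff3 f x0 x1 x2 x3 = divdiff3 fc x0 x1 x2 x3).
  { unfold fc, divdiff3. rewrite !clamp_id by lra. reflexivity. }
  assert (Jin : forall t, x0 < t < x3 -> interior_of I t).
  { intros t Ht. apply (interior_of_between I HI x0 t x3); auto. }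
  rewrite E. apply (divdiff3_nonneg_of_convex_derive fc g); auto.
  - intros t Ht. apply (continuity_pt_clamp_comp I); auto.
    apply Hc, (HI x0 t x3); auto.
  - intros t Ht. apply (is_derive_ext_loc f); [|apply Hd, Jin, Ht].
    apply (locally_interval _ t x0 x3); simpl; try lra.
    intros u Hu1 Hu2. unfold fc. rewrite clamp_id; simpl in *; lra.
  - intros x y z Hx Hz Hxyz. apply Hcv; auto.
Qed.

Lemma divdiff3_symmetric (f : R -> R) (m e r : R) : 0 < e < r ->
  divdiff3 f (m - r) (m - e) (m + e) (m + r) =
  ((f (m + r) - f (m - r)) / (2 * r) - (f (m + e) - f (m - e)) / (2 * e)) / (r ^ 2 - e ^ 2).
Proof.
  intros He. unfold divdiff3. field.
  repeat split; try lra; try nra.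
Qed.

Lemma midpoint_le_slope_of_convex3 (I : R -> Prop) (f g : R -> R) :
  is_interval I -> (forall t, interior_of I t -> is_derive f t (g t)) ->
  (forall t, interior_of I t -> continuous g t) -> convex3_on I f ->
  forall a b, interior_of I a -> interior_of I b -> a < b ->
    g ((a + b) / 2) <= (f b - f a) / (b - a).
Proof.
  intros HI Hd Hg H3 a b Ha Hb Hab.
  assert (HJ := interior_interval I HI).
  set (m := (a + b) / 2). set (r := (b - a) / 2).
  assert (Hr : 0 < r) by (unfold r; lra).
  assert (Jm : interior_of I m) by (apply (HJ a m b); auto; unfold m; lra).
  replace a with (m - r) in * by (unfold m, r; field).
  replace b with (m + r) in * by (unfold m, r; field).
  replace (m + r - (m - r)) with (2 * r) by ring.
  apply Rnot_lt_le. intro Hlt.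
  destruct (continuous_lt_locally g m _ (Hg m Jm) Hlt) as [delta Hdelta].
  set (e := Rmin delta r / 2).
  assert (He : 0 < e < r /\ e < delta).
  { pose proof (cond_pos delta). pose proof (Rmin_l delta r). pose proof (Rmin_r delta r).
    assert (0 < Rmin delta r) by (apply Rmin_glb_lt; lra). unfold e; lra. }
  destruct (MVT_is_derive f g (m - e) (m + e)) as [c [Hc E]]; [lra| |].
  { intros t Ht. apply Hd, (HJ (m - r) t (m + r)); auto; lra. }
  assert (Hgc : (f (m + r) - f (m - r)) / (2 * r) < g c).
  { apply Hdelta. change (Rabs (c - m) < delta). apply Rabs_def1; lra. }
  assert (Hin : forall t, m - r <= t <= m + r -> I t).
  { intros t Ht. apply interior_sub, (HJ (m - r) t (m + r)); auto. }
  pose proof (H3 (m - r) (m - e) (m + e) (m + r)) as H3'.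
  specialize (H3' ltac:(apply Hin; lra) ltac:(apply Hin; lra) ltac:(apply Hin; lra)
                  ltac:(apply Hin; lra) ltac:(lra) ltac:(lra) ltac:(lra)).
  rewrite divdiff3_symmetric in H3' by lra.
  replace ((f (m + e) - f (m - e)) / (2 * e)) with (g c) in H3'
    by (replace (m + e - (m - e)) with (2 * e) in E by ring; rewrite E; field; lra).
  assert (0 < r ^ 2 - e ^ 2) by nra.
  assert (Hle : 0 <= (f (m + r) - f (m - r)) / (2 * r) - g c).
  { apply (Rmult_le_reg_r (/ (r ^ 2 - e ^ 2))); [apply Rinv_0_lt_compat; lra|].
    rewrite Rmult_0_l. exact H3'. }
  lra.
Qed.

(** * The two-panel trapezoid inequality *)

(* For p' = h, (h a + 2 h m + h b) / 4 is the two-panel trapezoid rule for the mean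
   (p b - p a) / (b - a) of h on [a, b]; condition (iii) reads 0 <= trap2_gap f f' a b. *)
Definition trap2_gap (p h : R -> R) (a b : R) : R :=
  / 2 * ((h a + h b) / 2 + h ((a + b) / 2)) - (p b - p a) / (b - a).

Lemma trap2_gap_halves (p h : R -> R) (a b : R) : a < b ->
  let m := (a + b) / 2 in
  trap2_gap p h a b = / 2 * (((h a + h m) / 2 - (p m - p a) / (m - a))
                             + ((h m + h b) / 2 - (p b - p m) / (b - m))).
Proof. intros Hab m. unfold trap2_gap, m. field. lra. Qed.

Section ConvexDerivative.
Variables (J : R -> Prop) (f g : R -> R).
Hypothesis J_interval : is_interval J.
Hypothesis f_derive : forall t, J t -> is_derive f t (g t).
Hypothesis g_convex : convex_on J g.

Lemma convex_on_sym_sum_le u v t : J u -> J v -> u < v -> 0 <= t <= (v - u) / 2 ->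
  g ((u + v) / 2 - t) + g ((u + v) / 2 + t) <= g u + g v.
Proof.
  intros Hu Hv Huv Ht.
  pose proof (convex_on_le J g g_convex u ((u + v) / 2 - t) v Hu Hv ltac:(lra)) as H1.
  pose proof (convex_on_le J g g_convex u ((u + v) / 2 + t) v Hu Hv ltac:(lra)) as H2.
  apply (Rmult_le_reg_r (v - u)); [lra|]. nra.
Qed.

Lemma slope_le_trapezoid u v : J u -> J v -> u < v -> (f v - f u) / (v - u) <= (g u + g v) / 2.
Proof.
  intros Hu Hv Huv.
  set (c := (u + v) / 2). set (r := (v - u) / 2).
  set (psi := fun t => t * (g u + g v) - (f (c + t) - f (c - t))).
  assert (Hpsi : psi 0 <= psi r).
  { apply (le_of_derive_nonneg psi (fun t => g u + g v - g (c + t) - g (c - t))).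
    - unfold r; lra.
    - intros t Ht.
      assert (Jp : J (c + t)) by (apply (J_interval u _ v); auto; unfold c, r in *; lra).
      assert (Jm : J (c - t)) by (apply (J_interval u _ v); auto; unfold c, r in *; lra).
      pose proof (f_derive _ Jp). pose proof (f_derive _ Jm).
      unfold psi. derive_with_hyps. ring.
    - intros t Ht. pose proof (convex_on_sym_sum_le u v t Hu Hv Huv Ht). unfold c. lra. }
  unfold psi in Hpsi.
  replace (c + r) with v in Hpsi by (unfold c, r; field).
  replace (c - r) with u in Hpsi by (unfold c, r; field).
  replace (v - u) with (2 * r) by (unfold r; field).
  assert (0 < r) by (unfold r; lra).
  apply (Rmult_le_reg_r (2 * r)); [lra|].
  replace ((f v - f u) / (2 * r) * (2 * r)) with (f v - f u) by (field; lra).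
  replace (c + 0) with c in Hpsi by ring. replace (c - 0) with c in Hpsi by ring. lra.
Qed.

Lemma trap2_gap_nonneg a b : J a -> J b -> a < b -> 0 <= trap2_gap f g a b.
Proof.
  intros Ha Hb Hab. rewrite trap2_gap_halves by exact Hab. set (m := (a + b) / 2).
  assert (Jm : J m) by (apply (J_interval a m b); auto; unfold m; lra).
  pose proof (slope_le_trapezoid a m Ha Jm ltac:(unfold m; lra)).
  pose proof (slope_le_trapezoid m b Jm Hb ltac:(unfold m; lra)).
  lra.
Qed.

End ConvexDerivative.

Lemma trapezoid_lt_slope (p h k l : R -> R) (u v : R) : u < v ->
  (forall t, u <= t <= v ->
     is_derive p t (h t) /\ is_derive h t (k t) /\ is_derive k t (l t) /\ l t < 0) ->
  (h u + h v) / 2 < (p v - p u) / (v - u).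
Proof.
  intros Huv H.
  set (c := (u + v) / 2). set (r := (v - u) / 2).
  assert (Hr : 0 < r) by (unfold r; lra).
  assert (Hin : forall t, 0 <= t <= r -> u <= c - t <= v /\ u <= c + t <= v)
    by (intros t Ht; unfold c, r in *; lra).
  set (chi := fun t => h (c + t) + h (c - t)).
  assert (chi_decr : forall t, 0 <= t < r -> chi r < chi t).
  { intros t Ht. apply (lt_of_derive_neg chi (fun s => k (c + s) - k (c - s))); [lra| |].
    - intros s Hs. destruct (Hin s ltac:(lra)) as [Hm Hp].
      destruct (H _ Hm) as [_ [Dm _]]. destruct (H _ Hp) as [_ [Dp _]].
      unfold chi. derive_with_hyps. ring.
    - intros s Hs.
      assert (k (c + s) < k (c - s)); [|lra].
      apply (lt_of_derive_neg k l); [lra|intros; apply H; unfold c, r in *; lra|].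
      intros y Hy. apply H. unfold c, r in *; lra. }
  set (psi := fun t => t * chi r - (p (c + t) - p (c - t))).
  assert (Hpsi : psi r < psi 0).
  { apply (lt_of_derive_neg psi (fun t => chi r - chi t)); [exact Hr| |].
    - intros t Ht. destruct (Hin t Ht) as [Hm Hp].
      destruct (H _ Hm) as [Dm _]. destruct (H _ Hp) as [Dp _].
      unfold psi, chi. derive_with_hyps. ring.
    - intros t Ht. specialize (chi_decr t ltac:(lra)). lra. }
  unfold psi, chi in Hpsi.
  replace (c + r) with v in Hpsi by (unfold c, r; field).
  replace (c - r) with u in Hpsi by (unfold c, r; field).
  replace (c + 0) with c in Hpsi by ring. replace (c - 0) with c in Hpsi by ring.
  replace (v - u) with (2 * r) by (unfold r; field).
  apply (Rmult_lt_reg_r (2 * r)); [lra|].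
  replace ((p v - p u) / (2 * r) * (2 * r)) with (p v - p u) by (field; lra).
  lra.
Qed.

Lemma trap2_gap_neg (p h k l : R -> R) (a b : R) : a < b ->
  (forall t, a <= t <= b ->
     is_derive p t (h t) /\ is_derive h t (k t) /\ is_derive k t (l t) /\ l t < 0) ->
  trap2_gap p h a b < 0.
Proof.
  intros Hab H. rewrite trap2_gap_halves by exact Hab. set (m := (a + b) / 2).
  assert (H1 := trapezoid_lt_slope p h k l a m ltac:(unfold m; lra)
                  ltac:(intros t Ht; apply H; unfold m in *; lra)).
  assert (H2 := trapezoid_lt_slope p h k l m b ltac:(unfold m; lra)
                  ltac:(intros t Ht; apply H; unfold m in *; lra)).
  lra.
Qed.

Definition diff2 (d : R) (p : R -> R) (t : R) : R := p t - 2 * p (t + d) + p (t + 2 * d).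

Lemma continuous_diff2 (g : R -> R) (d x : R) :
  continuous g x -> continuous g (x + d) -> continuous g (x + 2 * d) ->
  continuous (diff2 d g) x.
Proof.
  intros H0 H1 H2. unfold diff2.
  apply (continuous_plus (fun u => g u - 2 * g (u + d))); [|apply continuous_shift, H2].
  apply (continuous_minus g); [exact H0|].
  apply (continuous_scal_r 2 (fun u => g (u + d))), continuous_shift, H1.
Qed.

Lemma is_derive_diff2 (P p : R -> R) (d t : R) :
  is_derive P t (p t) -> is_derive P (t + d) (p (t + d)) ->
  is_derive P (t + 2 * d) (p (t + 2 * d)) -> is_derive (diff2 d P) t (diff2 d p t).
Proof.
  intros H0 H1 H2. unfold diff2. derive_with_hyps. ring.
Qed.

Lemma diff2_nonneg (P p q : R -> R) (d : R) : 0 < d ->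
  (forall w, 0 <= w <= 2 * d -> is_derive P w (p w) /\ is_derive p w (q w) /\ 0 <= q w) ->
  0 <= diff2 d P 0.
Proof.
  intros Hd H.
  destruct (MVT_is_derive P p 0 d) as [c1 [Hc1 E1]]; [lra|intros; apply H; lra|].
  destruct (MVT_is_derive P p d (2 * d)) as [c2 [Hc2 E2]]; [lra|intros; apply H; lra|].
  assert (p c1 <= p c2).
  { apply (le_of_derive_nonneg p q); [lra|intros; apply H; lra|intros; apply H; lra]. }
  unfold diff2. rewrite !Rplus_0_l. nra.
Qed.

Lemma is_derive_trap2_gap_shift (P p q : R -> R) (a b w : R) : a < b ->
  is_derive P (a + w) (p (a + w)) -> is_derive P (b + w) (p (b + w)) ->
  is_derive p (a + w) (q (a + w)) -> is_derive p (b + w) (q (b + w)) ->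
  is_derive p ((a + b) / 2 + w) (q ((a + b) / 2 + w)) ->
  is_derive (fun s => trap2_gap (fun t => P (t + s)) (fun t => p (t + s)) a b) w
    (trap2_gap (fun t => p (t + w)) (fun t => q (t + w)) a b).
Proof. intros Hab H1 H2 H3 H4 H5. unfold trap2_gap. derive_with_hyps. field. lra. Qed.

(* diff2 d FF t is d^2 times a hat-weighted mean of f over [t, t + 2d]; the inequality
   holds because the trapezoid gap of the pair (FF, F) shifted by w is convex in w. *)
Lemma trap2_gap_diff2_nonneg (J : R -> Prop) (FF F f g : R -> R) (a b d : R) :
  is_interval J ->
  (forall t, J t -> is_derive FF t (F t) /\ is_derive F t (f t) /\ is_derive f t (g t)) ->
  (forall x y, J x -> J y -> x < y -> 0 <= trap2_gap f g x y) ->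
  a < b -> 0 < d -> J a -> J (b + 2 * d) ->
  0 <= trap2_gap (diff2 d FF) (diff2 d F) a b.
Proof.
  intros HJ HD Htrap Hab Hd Ja Jb.
  set (gap := fun (P Q : R -> R) w => trap2_gap (fun t => P (t + w)) (fun t => Q (t + w)) a b).
  assert (E : trap2_gap (diff2 d FF) (diff2 d F) a b = diff2 d (gap FF F) 0).
  { unfold gap, trap2_gap, diff2. rewrite !Rplus_0_l, !Rplus_0_r. field. lra. }
  rewrite E. apply (diff2_nonneg _ (gap F f) (gap f g) d Hd).
  intros w Hw.
  assert (Jw : forall s, a <= s <= b -> J (s + w))
    by (intros s Hs; apply (HJ a _ (b + 2 * d)); auto; lra).
  destruct (HD _ (Jw a ltac:(lra))) as [Pa [Qa Ra]].
  destruct (HD _ (Jw b ltac:(lra))) as [Pb [Qb Rb]].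
  destruct (HD _ (Jw ((a + b) / 2) ltac:(lra))) as [_ [Qm Rm]].
  split; [|split].
  - apply is_derive_trap2_gap_shift; assumption.
  - apply is_derive_trap2_gap_shift; assumption.
  - replace (gap f g w) with (trap2_gap f g (a + w) (b + w)).
    + apply Htrap; [apply Jw; lra|apply Jw; lra|lra].
    + unfold gap, trap2_gap.
      replace ((a + w + (b + w)) / 2) with ((a + b) / 2 + w) by field.
      replace (b + w - (a + w)) with (b - a) by ring. reflexivity.
Qed.

Section Trapezoid2.
Variables (J : R -> Prop) (f g : R -> R).
Hypothesis J_interval : is_interval J.
Hypothesis J_open : open J.
Hypothesis f_derive : forall t, J t -> is_derive f t (g t).
Hypothesis g_cont : forall t, J t -> continuous g t.
Hypothesis trap2 : forall a b, J a -> J b -> a < b -> 0 <= trap2_gap f g a b.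

Lemma midpoint_convex_of_trap2 t r : 0 < r -> J (t - r) -> J (t + r) ->
  g t <= (g (t - r) + g (t + r)) / 2.
Proof.
  intros Hr Jm Jp. apply Rnot_lt_le. intro Hlt.
  set (t0 := t - r).
  assert (Jt : J (t0 + r)).
  { unfold t0. replace (t - r + r) with t by ring. apply (J_interval (t - r) t (t + r)); auto; lra. }
  assert (J2 : J (t0 + 2 * r)) by (unfold t0; replace (t - r + 2 * r) with (t + r) by ring; exact Jp).
  assert (Hneg : diff2 r g t0 < 0).
  { unfold diff2, t0. replace (t - r + r) with t by ring.
    replace (t - r + 2 * r) with (t + r) by ring. lra. }
  destruct (second_antiderivative_on J f t0 J_interval J_open Jm) as [F [FF HD]].
  { intros x Jx. apply (@ex_derive_continuous R_AbsRing R_NormedModule).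
    eexists. apply f_derive, Jx. }
  assert (Hl : locally t0 (fun u => diff2 r g u < 0 /\ J u /\ J (u + 2 * r))).
  { repeat apply filter_and.
    - apply continuous_gt_locally; [|exact Hneg].
      apply continuous_diff2; apply g_cont; assumption.
    - apply J_open, Jm.
    - apply locally_shift, J_open, J2. }
  destruct Hl as [eta Heta].
  set (a := t0 - eta / 2). set (b := t0 + eta / 2).
  assert (Hab : a < b) by (pose proof (cond_pos eta); unfold a, b; lra).
  assert (Hnear : forall u, a <= u <= b -> diff2 r g u < 0 /\ J u /\ J (u + 2 * r)).
  { intros u Hu. apply Heta. change (Rabs (u - t0) < eta).
    pose proof (cond_pos eta). apply Rabs_def1; unfold a, b in Hu; lra. }
  assert (Hder : forall u, J u -> J (u + 2 * r) ->
     is_derive (diff2 r FF) u (diff2 r F u) /\ is_derive (diff2 r F) u (diff2 r f u)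
     /\ is_derive (diff2 r f) u (diff2 r g u)).
  { intros u Ju Ju2. assert (Ju1 : J (u + r)) by (apply (J_interval u _ (u + 2 * r)); auto; lra).
    split; [|split]; apply is_derive_diff2; try apply HD; auto. }
  assert (Hnn : 0 <= trap2_gap (diff2 r FF) (diff2 r F) a b).
  { apply (trap2_gap_diff2_nonneg J FF F f g); auto; try apply Hnear; try lra.
    intros x Jx. destruct (HD x Jx). auto. }
  assert (Hgap : trap2_gap (diff2 r FF) (diff2 r F) a b < 0).
  { apply (trap2_gap_neg _ _ (diff2 r f) (diff2 r g)); [exact Hab|].
    intros u Hu. destruct (Hnear u Hu) as [Hn [Ju Ju2]].
    destruct (Hder u Ju Ju2) as [D1 [D2 D3]]. auto. }
  lra.
Qed.

End Trapezoid2.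

Theorem theorem4 (I : R -> Prop) (f : R -> R) :
  is_interval I ->
  continuous_on_set I f ->
  C1_on_interior I f ->
  (convex3_on I f <->
   (forall a b, interior_of I a -> interior_of I b -> a < b ->
      Derive f ((a + b) / 2) <= (f b - f a) / (b - a)))
  /\
  (convex3_on I f <->
   (forall a b, interior_of I a -> interior_of I b -> a < b ->
      (f b - f a) / (b - a) <=
        / 2 * ((Derive f a + Derive f b) / 2 + Derive f ((a + b) / 2)))).
Proof.
  intros HI Hc HC1.
  assert (HJ : is_interval (interior_of I)) by exact (interior_interval I HI).
  assert (Hd : forall t, interior_of I t -> is_derive f t (Derive f t))
    by (intros t Jt; apply Derive_correct, HC1, Jt).
  assert (Hg : forall t, interior_of I t -> continuous (Derive f) t) by (intros t Jt; apply HC1, Jt).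
  assert (trap2_iff : forall a b,
    (f b - f a) / (b - a) <= / 2 * ((Derive f a + Derive f b) / 2 + Derive f ((a + b) / 2))
    <-> 0 <= trap2_gap f (Derive f) a b) by (intros a b; unfold trap2_gap; split; lra).
  assert (convex3_ii := midpoint_le_slope_of_convex3 I f (Derive f) HI Hd Hg).
  assert (ii_convex := convex_derive_of_midpoint_le_slope (interior_of I) f (Derive f) HJ Hd Hg).
  assert (convex_convex3 := convex3_of_convex_derive I f (Derive f) HI Hc Hd).
  split; split.
  - exact convex3_ii.
  - intros Hii. apply convex_convex3, ii_convex, Hii.
  - intros H3 a b Ha Hb Hab. apply trap2_iff.
    exact (trap2_gap_nonneg _ f _ HJ Hd (ii_convex (convex3_ii H3)) a b Ha Hb Hab).
  - intros Hiii. apply convex_convex3, convex_on_of_midpoint; [exact HJ|exact Hg|].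
    apply (midpoint_convex_of_trap2 _ f _ HJ (interior_open I) Hd Hg).
    intros a b Ha Hb Hab. apply trap2_iff, Hiii; assumption.
Qed.
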